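(* Let $f$ be a function of unitation on $\{0,1\}^n$, and let $\sigma=1$, $\kappa\in\mathbb{N}$ and $\mu\geq (n+1)\cdot\kappa$. Then the expected time (number of generations) for the $(\mu+1)$ EA with phenotypic clearing with clearing radius $\sigma$, niche capacity $\kappa$ and population size $\mu$ on $f$ to find the search points $0^n$ and $1^n$ is $O(\mu n\log n)$.
   Context: A function of unitation is $f:\{0,1\}^n\to\mathbb{R}$ with $f(x)=u(|x|_1)$ for some $u:\{0,\dots,n\}\to\mathbb{R}^+$, where $|x|_1$ is the number of 1-bits of $x$; fitness values are assumed positive. The $(\mu+1)$ EA with clearing (population size $\mu$, clearing radius $\sigma$, niche capacity $\kappa$, distance function $\mathrm{d}$): $P_0$ consists of $\mu$ bit strings chosen independently and uniformly at random. In generation $t$: choose a parent $x\in P_t$ uniformly at random; create $y$ by flipping each bit of $x$ independently with probability $1/n$; let $P_t^*=P_t\cup\{y\}$; update the fitness values of $P_t^*$ by the clearing procedure: sort $P_t^*$ by decreasing fitness; for $i=1,\dots,|P_t^*|$, if the current fitness of $P[i]$ is positive, set $w:=1$ and for $j=i+1,\dots,|P_t^*|$: if the current fitness of $P[j]$ is positive and $\mathrm{d}(P[i],P[j])<\sigma$ then, if $w<\kappa$ set $w:=w+1$, else set the fitness of $P[j]$ to $0$. Individuals whose fitness is not reset are winners, the others are cleared. Then choose $z\in P_t$ with worst (cleared) fitness uniformly at random; if the (cleared) fitness of $y$ is at least that of $z$, set $P_{t+1}=P_t^*\setminus\{z\}$, otherwise $P_{t+1}=P_t^*\setminus\{y\}$.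 Phenotypic clearing uses $\mathrm{d}(x,y)=\big||x|_1-|y|_1\big|$. *)

From HB Require Import structures.
From mathcomp Require Import all_boot all_order all_algebra.
From mathcomp Require Import reals exp.
Set Implicit Arguments. Unset Strict Implicit. Unset Printing Implicit Defensive.
Import Order.TTheory GRing.Theory Num.Theory.
Local Open Scope ring_scope.

Definition bits (n : nat) := {ffun 'I_n -> bool}.
Definition pop (mu n : nat) := {ffun 'I_mu -> bits n}.

Definition ones n (x : bits n) : nat := #|[pred i | x i]|.
Definition zeros_str n : bits n := [ffun => false].
Definition ones_str n : bits n := [ffun => true].

Definition hamming n (x y : bits n) : nat := #|[pred i | x i != y i]|.

Definition pheno_dist n (x y : bits n) : nat :=
  ((ones x - ones y) + (ones y - ones x))%N.

Section Process.
Variable R : realType.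

Definition mut_prob n (x y : bits n) : R :=
  (n%:R^-1) ^+ (hamming x y) * (1 - n%:R^-1) ^+ (n - hamming x y).

(* Clearing procedure, implemented literally.  [s] is the population
   P_t^* sorted by decreasing fitness (a permutation of its indices),
   [cf] the current fitness values, [dist] the distance, [sigma] the
   clearing radius and [kappa] the niche capacity. *)
Section Clearing.
Variables (m : nat) (dist : 'I_m -> 'I_m -> nat) (sigma kappa : nat).

Definition reset (cf : 'I_m -> R) (k : 'I_m) : 'I_m -> R :=
  fun l => if l == k then 0 else cf l.

Fixpoint clear_inner (x : 'I_m) (rest : seq 'I_m) (w : nat) (cf : 'I_m -> R)
  : 'I_m -> R :=
  match rest with
  | [::] => cf
  | y :: r =>
      if (0 < cf y) && (dist x y < sigma)%N then
        if (w < kappa)%N then clear_inner x r w.+1 cf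
        else clear_inner x r w (reset cf y)
      else clear_inner x r w cf
  end.

Fixpoint clear_outer (s : seq 'I_m) (cf : 'I_m -> R) : 'I_m -> R :=
  match s with
  | [::] => cf
  | x :: r => clear_outer r (if 0 < cf x then clear_inner x r 1 cf else cf)
  end.
End Clearing.

Section EA.
Variables (n mu kappa : nat) (u : nat -> R).

Definition fit (x : bits n) : R := u (ones x).

(* A tie-breaking rule: for every extended population P^* (indexed by
   'I_mu.+1), an ordering of its indices sorted by decreasing fitness. *)
Definition sort_rule := {ffun 'I_mu.+1 -> bits n} -> seq 'I_mu.+1.

Definition valid_sort_rule (tb : sort_rule) : Prop :=
  forall Q : {ffun 'I_mu.+1 -> bits n},
    perm_eq (tb Q) (enum 'I_mu.+1) /\
    sorted (fun a b => fit (Q b) <= fit (Q a)) (tb Q).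

Variable tb : sort_rule.

(* P_t^* = P_t \cup {y}; the offspring y has index ord_max. *)
Definition pstar (P : pop mu n) (y : bits n) : {ffun 'I_mu.+1 -> bits n} :=
  [ffun k => if unlift ord_max k is Some i then P i else y].

Definition cleared (P : pop mu n) (y : bits n) : 'I_mu.+1 -> R :=
  let Q := pstar P y in
  clear_outer (fun k l => pheno_dist (Q k) (Q l)) 1 kappa (tb Q)
              (fun k => fit (Q k)).

Definition worst (P : pop mu n) (y : bits n) : {set 'I_mu} :=
  [set i : 'I_mu | [forall j : 'I_mu,
     cleared P y (lift ord_max i) <= cleared P y (lift ord_max j)]].

Definition next_pop (P : pop mu n) (y : bits n) (z : 'I_mu) : pop mu n :=
  if cleared P y (lift ord_max z) <= cleared P y ord_max
  then [ffun i => if i == z then y else P i]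
  else P.

Definition trans (P Q : pop mu n) : R :=
  \sum_(i : 'I_mu) \sum_(y : bits n)
    mu%:R^-1 * mut_prob (P i) y *
    \sum_(z in worst P y) (#|worst P y|%:R^-1 * (next_pop P y z == Q)%:R).

(* P_0: mu bit strings chosen independently and uniformly at random *)
Definition init_prob (P : pop mu n) : R := (#|{: pop mu n}|%:R)^-1.

Definition target (P : pop mu n) : bool :=
  [exists i, P i == zeros_str n] && [exists i, P i == ones_str n].

(* surv t P = Pr[P_0, ..., P_t all miss the target and P_t = P] *)
Fixpoint surv (t : nat) (Q : pop mu n) : R :=
  if target Q then 0 else
  match t with
  | 0 => init_prob Q
  | t'.+1 => \sum_(P : pop mu n) surv t' P * trans P Q
  end.

(* Pr[tau > t], tau = first generation t with P_t containing 0^n and 1^n *)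
Definition prob_not_yet (t : nat) : R := \sum_(P : pop mu n) surv t P.

(* partial sums of E[tau] = sum_{t >= 0} Pr[tau > t] *)
Definition exp_time_partial (T : nat) : R := \sum_(t < T) prob_not_yet t.

End EA.
End Process.

From HB Require Import structures.
From mathcomp Require Import all_boot all_order all_algebra.
From mathcomp Require Import reals exp sequences.
From mathcomp Require Import ring lra zify.
Set Implicit Arguments. Unset Strict Implicit. Unset Printing Implicit Defensive.
Import Order.TTheory GRing.Theory Num.Theory.
Local Open Scope ring_scope.

(* Let d_b(P) be the Hamming distance from the population P to b^n and H the
   partial sums of the harmonic series; the potential is e mu n (H d_0 + H d_1).
   While 0^n or 1^n is missing, at most n of the n+1 unitation niches are
   occupied, so at most n kappa < mu individuals of P win the clearing: the worst
   individual is cleared and is never a niche winner.  Hence the extreme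
   unitation values of the population never regress, and an offspring beyond
   an extreme value is accepted.  Selecting the extreme individual and flipping
   one of its d_b bits different from b has probability at least d_b/(e mu n)
   and lowers H d_b by 1/d_b, so the expected drop of the potential is at least
   1.  By additive drift the expected time is at most the initial potential,
   2 e mu n (1 + ln n). *)

Section RealBounds.
Variable R : realType.

Lemma le_1subV_ln (x : R) : 0 < x -> 1 - x^-1 <= ln x.
Proof.
move=> x_gt0; have xV_gt0 : 0 < x^-1 by rewrite invr_gt0.
have /le_ln1Dx : -1 < x^-1 - 1 by lra.
by rewrite addrC subrK lnV ?posrE //; lra.
Qed.

Local Notation H := (series (@harmonic R)).

Lemma le_series_harmonic : {mono H : k l / (k <= l)%N >-> k <= l}.
Proof. exact/increasing_series/harmonic_gt0. Qed.

Lemma series_harmonic_ge0 k : 0 <= H k.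
Proof. by rewrite /series /= sumr_ge0 // => j _; apply: harmonic_ge0. Qed.

Lemma series_harmonic_le_subV k l : (l < k)%N -> H l <= H k - (k%:R)^-1.
Proof. by case: k => // k lt_lk; rewrite seriesSr addrK le_series_harmonic. Qed.

Lemma series_harmonic_le_1Dln k : (0 < k)%N -> H k <= 1 + ln (k%:R : R).
Proof.
case: k => // k _; elim: k => [|k IHk]; first by rewrite /series /= big_nat1 ln1 invr1 addr0.
have ratio_gt0 : 0 < (k.+2%:R : R) / k.+1%:R by rewrite divr_gt0 ?ltr0n.
have := le_1subV_ln ratio_gt0.
rewrite ln_div ?posrE ?ltr0n // invf_div.
have -> : 1 - (k.+1%:R : R) / k.+2%:R = (k.+2%:R)^-1.
  by field; have := ler0n R k; lra.
by rewrite seriesSr => h; apply: le_trans (lerD IHk h) _; lra.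
Qed.

Lemma expN1_le_1subV_expn (n : nat) : (2 <= n)%N ->
  expR (-1) <= (1 - (n%:R : R)^-1) ^+ n.-1.
Proof.
case: n => [|[|k]] // _ /=.
have -> : 1 - (k.+2%:R : R)^-1 = k.+1%:R / k.+2%:R by field; have := ler0n R k; lra.
have x_gt0 : 0 < (k.+1%:R : R) / k.+2%:R by rewrite divr_gt0 ?ltr0n.
rewrite -ler_ln ?posrE ?expR_gt0 ?exprn_gt0 // expRK lnXn //.
have := le_1subV_ln x_gt0; rewrite invf_div.
have -> : 1 - (k.+2%:R : R) / k.+1%:R = - (k.+1%:R)^-1 by field; have := ler0n R k; lra.
move=> h; apply: le_trans (_ : - (k.+1%:R)^-1 *+ k.+1 <= _); last by rewrite lerMn2r h orbT.
by rewrite mulNrn -(mulr_natr (k.+1%:R)^-1) mulVf ?pnatr_eq0.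
Qed.

Lemma oneDln_le (n : nat) : (2 <= n)%N ->
  1 + ln (n%:R : R) <= (1 + (ln 2)^-1) * ln (n%:R : R).
Proof.
move=> n_ge2; have ln2_gt0 : 0 < ln (2 : R) by rewrite ln_gt0 // ltr1n.
have ln2V_gt0 : 0 < (ln (2 : R))^-1 by rewrite invr_gt0.
have : ln (2 : R) <= ln n%:R by rewrite ler_ln ?posrE ?ltr0n ?ler_nat // (ltn_trans _ n_ge2).
by rewrite -(ler_pM2l ln2V_gt0) mulVf ?lt0r_neq0 // => ?; lra.
Qed.

End RealBounds.

Section Bits.
Variable n : nat.
Implicit Types (x : bits n) (b : bool) (j : 'I_n).

Definition flip x j : bits n := [ffun i => if i == j then ~~ x i else x i].

Lemma hamming_flip x j : hamming x (flip x j) = 1%N.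
Proof.
rewrite /hamming -(card1 j); apply: eq_card => i; rewrite !inE ffunE.
by case: (i == j); case: (x i).
Qed.

Lemma flip_inj x : injective (flip x).
Proof.
move=> j k /ffunP/(_ j); rewrite !ffunE eqxx.
by case: eqP => // _; case: (x j).
Qed.

Lemma ones_le x : (ones x <= n)%N.
Proof. by rewrite -[X in (_ <= X)%N]card_ord max_card. Qed.

Definition nbits b x : nat := #|[pred i | x i == b]|.

Lemma nbits_le b x : (nbits b x <= n)%N.
Proof. by rewrite -[X in (_ <= X)%N]card_ord max_card. Qed.

Lemma nbitsE b x : nbits b x = if b then ones x else (n - ones x)%N.
Proof.
rewrite /nbits /ones; case: b; first by apply: eq_card => i; rewrite !inE eqb_id.
rewrite -[X in (X - _)%N](card_ord n) -(cardC [pred i | x i]) addKn.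
by apply: eq_card => i; rewrite !inE eqbF_neg.
Qed.

Lemma card_neq_nbits b x : #|[set j | x j != b]| = (n - nbits b x)%N.
Proof.
rewrite -[X in (X - _)%N](card_ord n) -(cardC [pred i | x i == b]) addKn cardsE.
by apply: eq_card => i; rewrite !inE.
Qed.

Lemma nbits_flip b x j : x j != b -> nbits b (flip x j) = (nbits b x).+1.
Proof.
move=> xjNb; have flip_jb : ~~ x j == b by move: xjNb; case: (x j); case: b.
rewrite /nbits (cardD1 j) !inE ffunE eqxx flip_jb add1n.
congr _.+1; apply: eq_card => i; rewrite !inE ffunE.
by case: eqP => [->|]; rewrite ?eqxx ?(negbTE xjNb).
Qed.

Lemma nbits_eq_n b x : nbits b x = n -> x = [ffun => b].
Proof.
move=> eq_n; apply/ffunP => i; rewrite ffunE; apply/eqP.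
have /eqP := card_neq_nbits b x; rewrite eq_n subnn cards_eq0.
by move=> /eqP/setP/(_ i); rewrite !inE => /negbFE.
Qed.

End Bits.

Section Mutation.
Variables (R : realType) (n : nat).
Implicit Types (x y : bits n) (j : 'I_n).
Local Notation p := ((n%:R : R)^-1).

Lemma mut_prob_prod x y :
  mut_prob R x y = \prod_i (if y i != x i then p else 1 - p).
Proof.
rewrite /mut_prob /hamming (bigID (fun i => y i != x i)) /=.
rewrite (eq_bigr (fun _ => p)); last by move=> i ->.
rewrite [X in _ = _ * X](eq_bigr (fun _ => 1 - p)); last by move=> i /negbTE ->.
rewrite !prodr_const -[X in (X - _)%N](card_ord n) -(cardC [pred i | x i != y i]) addKn.
by congr (_ ^+ _ * _ ^+ _); apply: eq_card => i; rewrite !inE eq_sym.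
Qed.

Lemma mut_prob_ge0 x y : 0 <= mut_prob R x y.
Proof.
have p_le1 : p <= 1 by case: n => [|k]; rewrite ?invr0 ?ler01 ?invf_le1 ?ler1n.
by rewrite mulr_ge0 ?exprn_ge0 ?subr_ge0 ?invr_ge0 ?ler0n.
Qed.

Lemma sum_mut_prob x : \sum_y mut_prob R x y = 1.
Proof.
under eq_bigr do rewrite mut_prob_prod.
rewrite -(bigA_distr_bigA (fun i b => if b != x i then p else 1 - p)) /=.
by apply: big1 => i _; rewrite big_bool /=; case: (x i) => /=; lra.
Qed.

Lemma mut_prob_flip_ge x j : (2 <= n)%N ->
  (expR 1 * n%:R)^-1 <= mut_prob R x (flip x j).
Proof.
move=> n_ge2; rewrite /mut_prob hamming_flip expr1 subn1 invfM mulrC -expRN.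
by rewrite ler_wpM2l ?invr_ge0 ?ler0n ?expN1_le_1subV_expn.
Qed.

Lemma sum_mut_prob_ge_flips x (S : {set 'I_n}) (D : bits n -> R) c :
  (2 <= n)%N -> (forall y, 0 <= D y) -> 0 <= c ->
  (forall j, j \in S -> c <= D (flip x j)) ->
  #|S|%:R * c / (expR 1 * n%:R) <= \sum_y mut_prob R x y * D y.
Proof.
move=> n_ge2 D_ge0 c_ge0 DS.
rewrite (bigID [in flip x @: S]) /=; apply: ler_wpDr.
  by apply: sumr_ge0 => y _; rewrite mulr_ge0 ?mut_prob_ge0.
rewrite big_imset /=; last by move=> j k _ _; apply: flip_inj.
apply: le_trans (_ : _ <= \sum_(j in S) (expR 1 * n%:R)^-1 * c) _.
  by rewrite sumr_const -(mulr_natl (_ * c)) [_^-1 * c]mulrC mulrA.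
apply: ler_sum => j jS; apply: ler_pM; rewrite ?invr_ge0 ?mulr_ge0 ?expR_ge0 ?ler0n //.
- exact: mut_prob_flip_ge.
- exact: DS.
Qed.

End Mutation.

Section Clearing.
Variables (R : realType) (m : nat) (dist : 'I_m -> 'I_m -> nat) (sigma kappa : nat).
Local Notation clear_in := (@clear_inner R m dist sigma kappa).
Local Notation clear_out := (@clear_outer R m dist sigma kappa).
Implicit Types (cf : 'I_m -> R) (r s : seq 'I_m).

Lemma clear_inner_kept_or_0 x r w cf l :
  clear_in x r w cf l = cf l \/ clear_in x r w cf l = 0.
Proof.
elim: r w cf => [|y r IHr] w cf /=; first by left.
case: ifP => _; [case: ifP => _|]; try exact: IHr.
have [->|->] := IHr w (reset cf y); last by right.
by rewrite /reset; case: eqP; [right|left].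
Qed.

Lemma clear_inner_notin x r w cf l : l \notin r -> clear_in x r w cf l = cf l.
Proof.
elim: r w cf => [|y r IHr] w cf //=; rewrite in_cons negb_or => /andP[lNy lNr].
by case: ifP => _; [case: ifP => _|]; rewrite IHr // /reset (negbTE lNy).
Qed.

Lemma clear_inner_far x r w cf l :
  ~~ (dist x l < sigma)%N -> clear_in x r w cf l = cf l.
Proof.
move=> far_l; elim: r w cf => [|y r IHr] w cf //=.
case: ifP => near_y; [case: ifP => _|]; rewrite IHr // /reset.
by case: eqP => // ely; move: near_y; rewrite -ely (negbTE far_l) andbF.
Qed.

Lemma clear_inner_count x r w cf : uniq r -> (w <= kappa)%N ->
  (count (fun l => (dist x l < sigma)%N && (0 < clear_in x r w cf l)%R) r
    <= kappa - w)%N.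
Proof.
elim: r w cf => [|y r IHr] w cf //= /andP[yNr uniq_r] le_wk.
case: ifP => near_y; last first.
  by rewrite clear_inner_notin // andbC near_y; apply: IHr.
case: ifP => lt_wk; rewrite clear_inner_notin //.
  by rewrite andbC near_y /=; have := IHr w.+1 cf uniq_r lt_wk; lia.
have -> : w = kappa by apply/eqP; rewrite eqn_leq le_wk leqNgt lt_wk.
by rewrite /reset eqxx ltxx andbF add0n; apply: IHr.
Qed.

Lemma clear_outer_kept_or_0 s cf l :
  clear_out s cf l = cf l \/ clear_out s cf l = 0.
Proof.
elim: s cf => [|a s IHs] cf /=; first by left.
set cf' := (if _ then _ else _).
have [->|->] := IHs cf'; last by right.
by rewrite /cf'; case: ifP => _; [exact: clear_inner_kept_or_0|left].
Qed.

Lemma clear_outer_notin s cf l : l \notin s -> clear_out s cf l = cf l.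
Proof.
elim: s cf => [|a s IHs] cf //=; rewrite in_cons negb_or => /andP[lNa lNs].
by rewrite IHs //; case: ifP => _ //; apply: clear_inner_notin.
Qed.

Variable level : 'I_m -> nat.
Hypothesis near_level : forall a b, (dist a b < sigma)%N = (level a == level b).

Lemma clear_outer_niche_count s cf k : uniq s -> (0 < kappa)%N ->
  (count (fun l => (level l == k) && (0 < clear_out s cf l)%R) s <= kappa)%N.
Proof.
move=> + kappa_gt0; elim: s cf => [|a s IHs] cf //= /andP[aNs uniq_s].
set cf' := (if _ then _ else _).
rewrite clear_outer_notin //; have [lev_a|] := eqVneq (level a) k; last first.
  by move=> _; apply: IHs.
case cf_a: (0 < cf a); last by rewrite /cf' cf_a /= cf_a; apply: IHs.
have le_count : (count (fun l => (level l == k) && (0 < clear_out s cf' l)%R) s <=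
          count (fun l => (dist a l < sigma)%N && (0 < cf' l)%R) s)%N.
  apply: sub_count => l /andP[lev_l pos_l]; rewrite near_level lev_a eq_sym lev_l.
  by have [<-|out_0] := clear_outer_kept_or_0 s cf' l; rewrite // out_0 ltxx in pos_l.
move: le_count; rewrite /cf' cf_a => le_count.
by have := @clear_inner_count a s 1 cf uniq_s kappa_gt0; lia.
Qed.

(* The first individual of a niche in the sorted order is never cleared. *)
Lemma clear_outer_niche_winner s cf k : uniq s -> has (fun l => level l == k) s ->
  (forall l, level l = k -> 0 < cf l) ->
  exists2 x, level x = k & 0 < clear_out s cf x.
Proof.
elim: s cf => [|a s IHs] cf //= /andP[aNs uniq_s] has_k pos_k.
set cf' := (if _ then _ else _).
have [lev_a|lev_a] := eqVneq (level a) k.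
  exists a => //; rewrite clear_outer_notin // /cf' pos_k //.
  by rewrite clear_inner_notin // pos_k.
move: has_k; rewrite (negbTE lev_a) /= => has_k.
apply: IHs => // l lev_l; rewrite /cf'; case: ifP => _; last exact: pos_k.
by rewrite clear_inner_far ?near_level ?lev_l ?pos_k.
Qed.

End Clearing.

Lemma card_perm_enum (T : finType) (s : seq T) (p : pred T) :
  perm_eq s (enum T) -> #|p| = count p s.
Proof.
move/permP => ->; rewrite cardE /enum_mem -size_filter -filter_predI.
by congr size; apply: eq_filter => x; rewrite /= !inE andbT.
Qed.

Lemma sum_uniform_le (R : numFieldType) (T : finType) (A : {set T}) (f : T -> R) c :
  A != set0 -> (forall z, z \in A -> f z <= c) -> \sum_(z in A) #|A|%:R^-1 * f z <= c.
Proof.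
move=> A_neq0 f_le; have A_gt0 : (0 < #|A|%:R :> R) by rewrite ltr0n card_gt0.
apply: le_trans (_ : _ <= \sum_(z in A) #|A|%:R^-1 * c) _.
  apply: ler_sum => z zA; apply: ler_wpM2l; [by rewrite invr_ge0 ltW | exact: f_le].
by rewrite sumr_const -(mulr_natr (_ * c)) mulrAC mulVf ?mul1r ?lt0r_neq0.
Qed.

Section AdditiveDrift.
Variables (R : realType) (n mu kappa : nat) (u : nat -> R) (tb : sort_rule n mu).
Implicit Types (P Q : pop mu n).

Lemma trans_ge0 P Q : 0 <= trans kappa u tb P Q.
Proof.
apply: sumr_ge0 => i _; apply: sumr_ge0 => y _.
apply: mulr_ge0; first by rewrite mulr_ge0 ?invr_ge0 ?ler0n ?mut_prob_ge0.
by apply: sumr_ge0 => z _; rewrite mulr_ge0 ?invr_ge0 ?ler0n.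
Qed.

Lemma surv_ge0 t Q : 0 <= surv kappa u tb t Q.
Proof.
elim: t Q => [|t IHt] Q /=; case: ifP => _ //; first by rewrite invr_ge0 ler0n.
by apply: sumr_ge0 => P _; rewrite mulr_ge0 ?IHt ?trans_ge0.
Qed.

Lemma sum_trans_mul (h : pop mu n -> R) P :
  \sum_Q trans kappa u tb P Q * h Q =
  \sum_(i < mu) \sum_(y : bits n) mu%:R^-1 * mut_prob R (P i) y *
     \sum_(z in worst kappa u tb P y)
        #|worst kappa u tb P y|%:R^-1 * h (next_pop kappa u tb P y z).
Proof.
under eq_bigr do rewrite mulr_suml; rewrite exchange_big; apply: eq_bigr => i _.
under eq_bigr do rewrite mulr_suml; rewrite exchange_big; apply: eq_bigr => y _.
transitivity (mu%:R^-1 * mut_prob R (P i) y * \sum_Q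
   (\sum_(z in worst kappa u tb P y)
      #|worst kappa u tb P y|%:R^-1 * (next_pop kappa u tb P y z == Q)%:R) * h Q).
  by rewrite mulr_sumr; apply: eq_bigr => Q _; rewrite mulrA.
congr (_ * _).
under eq_bigr do rewrite mulr_suml; rewrite exchange_big; apply: eq_bigr => z _.
rewrite (bigD1 (next_pop kappa u tb P y z)) //= eqxx mulr1 big1 ?addr0 // => Q.
by rewrite eq_sym => /negbTE ->; rewrite mulr0 mul0r.
Qed.

Variables (pot : pop mu n -> R) (B : R).
Hypothesis pot_ge0 : forall P, 0 <= pot P.
Hypothesis pot_le : forall P, pot P <= B.
Hypothesis pot_drift :
  forall P, ~~ target P -> \sum_Q trans kappa u tb P Q * pot Q <= pot P - 1.

Let surv_pot t := \sum_P surv kappa u tb t P * pot P.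

Lemma surv_pot_step t : prob_not_yet kappa u tb t <= surv_pot t - surv_pot t.+1.
Proof.
have -> : prob_not_yet kappa u tb t = surv_pot t - \sum_P surv kappa u tb t P * (pot P - 1).
  rewrite /surv_pot -sumrB; apply: eq_bigr => P _; ring.
rewrite lerD2l lerN2; apply: le_trans (_ : _ <=
  \sum_P surv kappa u tb t P * \sum_Q trans kappa u tb P Q * pot Q) _; last first.
  apply: ler_sum => P _; have [tP|ntP] := boolP (target P).
    by case: t => [|t] /=; rewrite tP !mul0r.
  by rewrite ler_wpM2l ?surv_ge0 ?pot_drift.
under [X in _ <= X]eq_bigr do rewrite mulr_sumr.
rewrite exchange_big; apply: ler_sum => Q _.
under eq_bigr do rewrite mulrA.
rewrite -mulr_suml ler_wpM2r //=.
case: ifP => _ //; apply: sumr_ge0 => P _.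
by rewrite mulr_ge0 ?surv_ge0 ?trans_ge0.
Qed.

Lemma exp_time_partial_le T : exp_time_partial kappa u tb T <= B.
Proof.
have surv_pot_ge0 t : 0 <= surv_pot t.
  by apply: sumr_ge0 => P _; rewrite mulr_ge0 ?surv_ge0.
have surv_pot0 : surv_pot 0 <= B.
  apply: le_trans (_ : _ <= \sum_P init_prob R P * B) _.
    apply: ler_sum => P _; rewrite ler_pM ?surv_ge0 //=.
    by case: ifP => _ //; rewrite invr_ge0 ler0n.
  have pop_gt0 : (0 < #|{: pop mu n}|)%N by apply/card_gt0P; exists [ffun => zeros_str n].
  rewrite -mulr_suml sumr_const /init_prob -(mulr_natr (#|{: pop mu n}|%:R^-1)).
  by rewrite mulVf ?mul1r // pnatr_eq0 -lt0n.
suff : exp_time_partial kappa u tb T <= surv_pot 0 - surv_pot T.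
  by have := surv_pot_ge0 T; lra.
elim: T => [|T IHT]; first by rewrite /exp_time_partial big_ord0 subrr.
rewrite /exp_time_partial big_ord_recr /=; have := surv_pot_step T.
by rewrite -/(exp_time_partial _ _ _ T); lra.
Qed.

End AdditiveDrift.

Section ClearingEA.
Variables (R : realType) (n mu kappa : nat) (u : nat -> R) (tb : sort_rule n mu).
Hypothesis u_gt0 : forall i, (i <= n)%N -> 0 < u i.
Hypothesis kappa_gt0 : (0 < kappa)%N.
Hypothesis tb_valid : valid_sort_rule u tb.
Hypothesis mu_ge : (n.+1 * kappa <= mu)%N.
Local Notation clr := (cleared kappa u tb).
Local Notation next := (next_pop kappa u tb).
Local Notation worst_of := (worst kappa u tb).
Implicit Types (P : pop mu n) (x y : bits n).

Lemma mu_gt0 : (0 < mu)%N.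
Proof. by apply: leq_trans mu_ge; rewrite muln_gt0 kappa_gt0. Qed.

Lemma fit_gt0 x : 0 < fit u x.
Proof. exact/u_gt0/ones_le. Qed.

Lemma pstar_lift P y i : pstar P y (lift ord_max i) = P i.
Proof. by rewrite ffunE liftK. Qed.

Lemma pstar_max P y : pstar P y ord_max = y.
Proof. by rewrite ffunE unlift_none. Qed.

Lemma pheno_dist_lt1 x y : (pheno_dist x y < 1)%N = (ones x == ones y).
Proof. by rewrite ltnS leqn0 addn_eq0 !subn_eq0 -eqn_leq. Qed.

Lemma cleared_niche_count P y k :
  (#|[pred l | (ones (pstar P y l) == k) && (0 < clr P y l)%R]| <= kappa)%N.
Proof.
have [perm_tb _] := tb_valid (pstar P y).
rewrite (card_perm_enum _ perm_tb); apply: clear_outer_niche_count => //.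
  by move=> a b; apply: pheno_dist_lt1.
by rewrite (perm_uniq perm_tb) enum_uniq.
Qed.

Lemma cleared_niche_winner P y l :
  exists2 x, ones (pstar P y x) = ones (pstar P y l) & 0 < clr P y x.
Proof.
have [perm_tb _] := tb_valid (pstar P y).
apply: (@clear_outer_niche_winner _ _ _ _ _ (fun l => ones (pstar P y l))).
- by move=> a b; apply: pheno_dist_lt1.
- by rewrite (perm_uniq perm_tb) enum_uniq.
- by apply/hasP; exists l; rewrite ?(perm_mem perm_tb) ?mem_enum.
- by move=> l' _; apply: fit_gt0.
Qed.

(* Pigeonhole: P occupies at most n niches, each with at most kappa winners. *)
Lemma card_uncleared_le P y L : (L <= n)%N -> (forall i, ones (P i) != L) ->
  (#|[set i | 0 < clr P y (lift ord_max i)]%R| <= n * kappa)%N.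
Proof.
move=> le_Ln L_free; set W := [set i | _].
rewrite -sum1_card (partition_big (fun i => inord (ones (P i)) : 'I_n.+1) predT) //=.
rewrite (bigD1 (inord L)) //= big1 => [|i /andP[_ /eqP iL]]; last first.
  by have := L_free i; rewrite -(inordK (ones_le (P i))) -(inordK le_Ln) iL eqxx.
rewrite add0n (@leq_trans (\sum_(k < n.+1 | k != inord L) kappa)) //; last first.
  by rewrite sum_nat_const cardC1 card_ord.
apply: leq_sum => k _; rewrite sum1dep_card; apply: leq_trans (cleared_niche_count P y k).
rewrite -(card_imset _ (@lift_inj _ ord_max)); apply/subset_leq_card/subsetP => l.
case/imsetP => i; rewrite !inE => /andP[pos_i /eqP <-] ->.
by rewrite pstar_lift inordK ?ltnS ?ones_le // eqxx.
Qed.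

Definition max_nbits b P : nat := \max_(i < mu) nbits b (P i).

Definition gap b P : nat := (n - max_nbits b P)%N.

Lemma max_nbits_ge b P i : (nbits b (P i) <= max_nbits b P)%N.
Proof. exact: (leq_bigmax (F := fun i => nbits b (P i))). Qed.

Lemma max_nbits_witness b P : exists i, nbits b (P i) = max_nbits b P.
Proof.
rewrite /max_nbits; have [|i ->] := @bigop.eq_bigmax _ (fun i => nbits b (P i)); last by exists i.
by rewrite card_ord mu_gt0.
Qed.

Lemma max_nbits_le b P : (max_nbits b P <= n)%N.
Proof. by have [i <-] := max_nbits_witness b P; apply: nbits_le. Qed.

Lemma nontarget_gap P : ~~ target P -> exists b, (0 < gap b P)%N.
Proof.
move=> not_target; have [b gap_b|no_gap] := pickP (fun b => 0 < gap b P)%N.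
  by exists b.
have full b : exists i, P i == [ffun => b].
  have [i max_i] := max_nbits_witness b P; exists i; apply/eqP/nbits_eq_n/eqP.
  by rewrite eqn_leq nbits_le max_i leqNgt -subn_gt0 no_gap.
by case/negP: not_target; apply/andP; split; apply/existsP; apply: full.
Qed.

Lemma nontarget_cleared P y : ~~ target P -> exists j, clr P y (lift ord_max j) <= 0.
Proof.
case/nontarget_gap => b; rewrite subn_gt0 => lt_max_n.
have L_free i : ones (P i) != (if b then n else 0%N).
  have := leq_ltn_trans (max_nbits_ge b P i) lt_max_n.
  by rewrite nbitsE; case: (b) => /=; lia.
have /card_gt0P[j] : (0 < #|~: [set i | 0 < clr P y (lift ord_max i)]%R|)%N.
  rewrite cardsCs setCK card_ord subn_gt0.
  apply: leq_ltn_trans (@card_uncleared_le P y _ _ L_free) _; first by case: (b).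
  by move: mu_ge; rewrite mulSn; lia.
by rewrite !inE -leNgt; exists j.
Qed.

Lemma worst_nonempty P y : worst_of P y != set0.
Proof.
case: (@arg_minP _ _ _ (Ordinal mu_gt0) predT (fun i => clr P y (lift ord_max i))) => // i _ min_i.
by apply/set0Pn; exists i; rewrite inE; apply/forallP => j; apply: min_i.
Qed.

Lemma worst_cleared P y z : ~~ target P -> z \in worst_of P y ->
  clr P y (lift ord_max z) <= 0.
Proof.
move=> /(nontarget_cleared y)[j cleared_j]; rewrite inE => /forallP min_z.
exact: le_trans (min_z j) cleared_j.
Qed.

Lemma next_pop_other P y z i : i != z -> next P y z i = P i.
Proof. by rewrite /next_pop; case: ifP => // _; rewrite ffunE => /negbTE ->. Qed.

(* The niche winner of P i survives, since the replaced worst individual is cleared. *)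
Lemma next_pop_keeps_ones P y z i : ~~ target P -> z \in worst_of P y ->
  exists i', ones (next P y z i') = ones (P i).
Proof.
move=> not_target z_worst; have [y_level|y_new] := eqVneq (ones y) (ones (P i)).
  rewrite /next_pop; case: ifP => _; last by exists i.
  by exists z; rewrite ffunE eqxx.
have [x x_level x_pos] := cleared_niche_winner P y (lift ord_max i).
have [i' x_i'|x_max] := unliftP ord_max x; last first.
  by move: x_level; rewrite x_max pstar_max pstar_lift => /eqP; rewrite (negbTE y_new).
move: x_level x_pos; rewrite x_i' !pstar_lift => <- x_pos.
exists i'; rewrite next_pop_other //; apply: contraTneq x_pos => ->.
by rewrite -leNgt worst_cleared.
Qed.

Lemma next_pop_new_ones P y z : ~~ target P -> z \in worst_of P y ->
  (forall i, ones (P i) != ones y) -> next P y z z = y.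
Proof.
move=> not_target z_worst y_new.
have [x x_level x_pos] := cleared_niche_winner P y ord_max.
have [i' x_i'|x_max] := unliftP ord_max x.
  by move: x_level; rewrite x_i' pstar_lift pstar_max => /eqP; rewrite (negbTE (y_new i')).
move: x_pos; rewrite x_max /next_pop => y_pos.
by rewrite (le_trans (worst_cleared not_target z_worst) (ltW y_pos)) ffunE eqxx.
Qed.

Lemma max_nbits_next P y z b : ~~ target P -> z \in worst_of P y ->
  (max_nbits b P <= max_nbits b (next P y z))%N.
Proof.
move=> not_target z_worst; have [i <-] := max_nbits_witness b P.
have [i' same_ones] := next_pop_keeps_ones i not_target z_worst.
by rewrite (nbitsE b (P i)) -same_ones -nbitsE max_nbits_ge.
Qed.

Lemma max_nbits_next_offspring P y z b : ~~ target P -> z \in worst_of P y ->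
  (max_nbits b P < nbits b y)%N -> (nbits b y <= max_nbits b (next P y z))%N.
Proof.
move=> not_target z_worst lt_max_y.
have y_new i : ones (P i) != ones y.
  apply: contraTneq lt_max_y => same_ones.
  by rewrite -leqNgt (nbitsE b y) -same_ones -nbitsE max_nbits_ge.
by rewrite -{1}(next_pop_new_ones not_target z_worst y_new) max_nbits_ge.
Qed.

Lemma series_harmonic_gap_next P y z b : ~~ target P -> z \in worst_of P y ->
  series (@harmonic R) (gap b (next P y z)) <= series (@harmonic R) (gap b P) -
    (if (max_nbits b P < nbits b y)%N then (gap b P)%:R^-1 else 0).
Proof.
move=> not_target z_worst; have le_max := max_nbits_next b not_target z_worst.
case: ifP => [lt_max_y|_]; last by rewrite subr0 le_series_harmonic leq_sub2l.
apply: series_harmonic_le_subV; have := max_nbits_le b (next P y z).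
by have := max_nbits_next_offspring not_target z_worst lt_max_y; rewrite /gap; lia.
Qed.

(* [gap b P] is the Hamming distance from P to b^n; [drift_coef] is the inverse of
   the lower bound 1/(e mu n) on the probability of selecting a given parent and
   flipping exactly one given bit. *)
Definition drift_coef : R := expR 1 * mu%:R * n%:R.

Definition pot P : R := drift_coef * \sum_b series (@harmonic R) (gap b P).

Definition gain P y : R :=
  drift_coef * \sum_b (if (max_nbits b P < nbits b y)%N then (gap b P)%:R^-1 else 0).

Lemma drift_coef_ge0 : 0 <= drift_coef.
Proof. by rewrite !mulr_ge0 ?expR_ge0 ?ler0n. Qed.

Lemma pot_ge0 P : 0 <= pot P.
Proof. by rewrite mulr_ge0 ?drift_coef_ge0 ?sumr_ge0 // => b _; apply: series_harmonic_ge0. Qed.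

Lemma gain_ge0 P y : 0 <= gain P y.
Proof.
rewrite mulr_ge0 ?drift_coef_ge0 ?sumr_ge0 // => b _.
by case: ifP; rewrite ?invr_ge0 ?ler0n.
Qed.

Lemma pot_next_le P y z : ~~ target P -> z \in worst_of P y ->
  pot (next P y z) <= pot P - gain P y.
Proof.
move=> not_target z_worst; rewrite -mulrBr ler_wpM2l ?drift_coef_ge0 // -sumrB.
by apply: ler_sum => b _; apply: series_harmonic_gap_next.
Qed.

Hypothesis n_ge2 : (2 <= n)%N.

Lemma pot_le P : pot P <= 2 * drift_coef * (1 + ln (n%:R : R)).
Proof.
rewrite -mulrA mulrCA ler_wpM2l ?drift_coef_ge0 //.
apply: le_trans (_ : _ <= \sum_(b : bool) (1 + ln (n%:R : R))) _.
  apply: ler_sum => b _; apply: le_trans (series_harmonic_le_1Dln _ _); last exact: ltnW.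
  by rewrite le_series_harmonic leq_subr.
by rewrite sumr_const card_bool mulr2n mulr_natl.
Qed.

Lemma expected_gain_ge P : ~~ target P ->
  mu%:R <= \sum_(i < mu) \sum_y mut_prob R (P i) y * gain P y.
Proof.
case/nontarget_gap => b gap_gt0; have [i max_i] := max_nbits_witness b P.
apply: le_trans (_ : _ <= \sum_y mut_prob R (P i) y * gain P y) _; last first.
  rewrite (bigD1 i) //= lerDl; apply: sumr_ge0 => i' _; apply: sumr_ge0 => y _.
  by rewrite mulr_ge0 ?mut_prob_ge0 ?gain_ge0.
have gain_flip j : j \in [set j | P i j != b] ->
    drift_coef / (gap b P)%:R <= gain P (flip (P i) j).
  rewrite inE => Pij_neq_b; rewrite ler_wpM2l ?drift_coef_ge0 // (bigD1 b) //=.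
  rewrite nbits_flip // max_i ltnSn lerDl sumr_ge0 // => b' _.
  by case: ifP; rewrite ?invr_ge0 ?ler0n.
have c_ge0 : 0 <= drift_coef / (gap b P)%:R by rewrite divr_ge0 ?drift_coef_ge0 ?ler0n.
apply: le_trans (sum_mut_prob_ge_flips n_ge2 (gain_ge0 P) c_ge0 gain_flip).
rewrite card_neq_nbits max_i -/(gap b P) le_eqVlt; apply/predU1P; left.
rewrite /drift_coef; field.
by rewrite !pnatr_eq0 -!lt0n gap_gt0 gt_eqF ?expR_gt0 ?(leq_trans _ n_ge2).
Qed.

Lemma pot_drift P : ~~ target P ->
  \sum_Q trans kappa u tb P Q * pot Q <= pot P - 1.
Proof.
move=> not_target; rewrite sum_trans_mul.
apply: le_trans (_ : _ <= \sum_(i < mu) \sum_y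
    mu%:R^-1 * mut_prob R (P i) y * (pot P - gain P y)) _.
  apply: ler_sum => i _; apply: ler_sum => y _; apply: ler_wpM2l.
    by rewrite mulr_ge0 ?invr_ge0 ?ler0n ?mut_prob_ge0.
  by apply: sum_uniform_le (worst_nonempty P y) _ => z; apply: pot_next_le.
have mu_neq0 : mu%:R != 0 :> R by rewrite pnatr_eq0 -lt0n mu_gt0.
have mean_i i : \sum_y mu%:R^-1 * mut_prob R (P i) y * (pot P - gain P y) =
    mu%:R^-1 * pot P - mu%:R^-1 * \sum_y mut_prob R (P i) y * gain P y.
  transitivity (\sum_y (mu%:R^-1 * pot P * mut_prob R (P i) y -
                        mu%:R^-1 * (mut_prob R (P i) y * gain P y))).
    by apply: eq_bigr => y _; ring.
  by rewrite sumrB -!mulr_sumr sum_mut_prob mulr1.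
under eq_bigr do rewrite mean_i.
rewrite sumrB sumr_const card_ord -(mulr_natr (mu%:R^-1 * pot P)) mulrAC mulVf // mul1r.
rewrite -mulr_sumr lerD2l lerN2.
have muV_ge0 : 0 <= mu%:R^-1 :> R by rewrite invr_ge0 ler0n.
by have := ler_wpM2l muV_ge0 (expected_gain_ge not_target); rewrite mulVf.
Qed.

End ClearingEA.

Theorem lemma2 (R : realType) :
  exists (C : R) (n0 : nat), 0 < C /\
  forall (n mu kappa : nat) (u : nat -> R) (tb : sort_rule n mu),
    (n0 <= n)%N ->
    (forall i, (i <= n)%N -> 0 < u i) ->
    (0 < kappa)%N ->
    (n.+1 * kappa <= mu)%N ->
    valid_sort_rule u tb ->
    forall T : nat,
      exp_time_partial kappa u tb T <= C * mu%:R * n%:R * ln (n%:R : R).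
Proof.
have ln2_gt0 : 0 < ln (2 : R) by rewrite ln_gt0 // ltr1n.
exists (2 * expR 1 * (1 + (ln 2)^-1)), 2%N; split.
  by rewrite !mulr_gt0 ?expR_gt0 // addr_gt0 // invr_gt0.
move=> n mu kappa u tb n_ge2 u_gt0 kappa_gt0 mu_ge tb_valid T.
have drift := pot_drift u_gt0 kappa_gt0 tb_valid mu_ge n_ge2.
apply: le_trans (exp_time_partial_le (@pot_ge0 R n mu) (pot_le R n_ge2) drift T) _.
have K_ge0 : 0 <= 2 * drift_coef R n mu by rewrite mulr_ge0 ?drift_coef_ge0.
apply: le_trans (ler_wpM2l K_ge0 (oneDln_le R n_ge2)) _.
by rewrite /drift_coef le_eqVlt; apply/predU1P; left; ring.
Qed.
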